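(* Let $\Sigma=(X,\mathcal{S},\phi)$ be a forward complete dynamical system and let $t_1>0$, $G_0>0$ be such that $$\|\phi(t,x,\sigma)\|\le G_0\|x\|\quad\text{for all } t\in[0,t_1],\ x\in X,\ \sigma\in\mathcal{S}.$$ Then the following statements are equivalent: (i) $\Sigma$ is UGES; (ii) for every $p>0$ there exists $k>0$ such that $\int_0^{+\infty}\|\phi(t,x,\sigma)\|^p\,dt\le k^p\|x\|^p$ for all $x\in X$, $\sigma\in\mathcal{S}$; (iii) there exist $p,k>0$ such that $\int_0^{+\infty}\|\phi(t,x,\sigma)\|^p\,dt\le k^p\|x\|^p$ for all $x\in X$, $\sigma\in\mathcal{S}$.
   Context: $(X,\|\cdot\|)$ is a Banach space. Let $\mathcal{Q}$ be a nonempty set and $\mathcal{S}$ a set of functions $\sigma:\mathbb{R}_+\to\mathcal{Q}$ which is closed by time-shift (for $\sigma\in\mathcal{S}$, $\tau\ge0$, the function $\mathbb{T}_\tau\sigma:s\mapsto\sigma(\tau+s)$ is in $\mathcal{S}$) and closed by concatenation (for $\sigma_1,\sigma_2\in\mathcal{S}$, $\tau>0$, the function equal to $\sigma_1$ on $[0,\tau]$ and with $\sigma(\tau+t)=\sigma_2(t)$ for $t>0$ is in $\mathcal{S}$). A triple $\Sigma=(X,\mathcal{S},\phi)$ with $\phi:\mathbb{R}_+\times X\times\mathcal{S}\to X$ is a forward complete dynamical system if: (i) $\phi(0,x,\sigma)=x$; (ii) if $\tilde\sigma=\sigma$ on $[0,t]$ then $\phi(t,x,\tilde\sigma)=\phi(t,x,\sigma)$;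 (iii) $t\mapsto\phi(t,x,\sigma)$ is continuous; (iv) $\phi(\tau,\phi(t,x,\sigma),\mathbb{T}_t\sigma)=\phi(t+\tau,x,\sigma)$ for all $t,\tau\ge0$, $x\in X$, $\sigma\in\mathcal{S}$. $\Sigma$ is uniformly globally exponentially stable at the origin (UGES) if there exist $M,\lambda>0$ such that $\|\phi(t,x,\sigma)\|\le Me^{-\lambda t}\|x\|$ for all $t\ge0$, $x\in X$, $\sigma\in\mathcal{S}$. *)

From HB Require Import structures.
From mathcomp Require Import all_boot all_order all_algebra.
From mathcomp Require Import all_classical all_reals all_analysis.
Set Implicit Arguments. Unset Strict Implicit. Unset Printing Implicit Defensive.
Import Order.TTheory GRing.Theory Num.Theory.
Import numFieldNormedType.Exports.
Local Open Scope classical_set_scope.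
Local Open Scope ring_scope.

(* Switching signals sigma : R_+ -> Q are represented as functions R -> Q;
   only their values on [0, +oo) are ever used. *)
Definition tshift {R : realType} {Q : Type} (tau : R) (s : R -> Q) : R -> Q :=
  fun t => s (tau + t).

Definition tconcat {R : realType} {Q : Type} (s1 s2 : R -> Q) (tau : R) : R -> Q :=
  fun t => if t <= tau then s1 t else s2 (t - tau).

Definition shift_closed {R : realType} {Q : Type} (S : set (R -> Q)) : Prop :=
  forall s tau, S s -> 0 <= tau -> S (tshift tau s).

Definition concat_closed {R : realType} {Q : Type} (S : set (R -> Q)) : Prop :=
  forall s1 s2 tau, S s1 -> S s2 -> 0 < tau -> S (tconcat s1 s2 tau).

Definition forward_complete_dynsys {R : realType} {Q : Type}
  {X : completeNormedModType R} (S : set (R -> Q)) (phi : R -> X -> (R -> Q) -> X) : Prop :=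
  [/\ (forall x s, S s -> phi 0 x s = x),
      (forall t x s s', 0 <= t -> S s -> S s' ->
          (forall u, 0 <= u <= t -> s' u = s u) -> phi t x s' = phi t x s),
      (forall x s, S s -> {within `[0, +oo[, continuous (fun t => phi t x s)}) &
      (forall t tau x s, 0 <= t -> 0 <= tau -> S s ->
          phi tau (phi t x s) (tshift t s) = phi (t + tau) x s)].

Definition UGES {R : realType} {Q : Type}
  {X : completeNormedModType R} (S : set (R -> Q)) (phi : R -> X -> (R -> Q) -> X) : Prop :=
  exists M lam : R, [/\ 0 < M, 0 < lam &
    forall t x s, 0 <= t -> S s -> `|phi t x s| <= M * expR (- lam * t) * `|x| ].

Definition Lp_bound {R : realType} {Q : Type}
  {X : completeNormedModType R} (S : set (R -> Q)) (phi : R -> X -> (R -> Q) -> X)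
  (p k : R) : Prop :=
  forall x s, S s ->
    (\int[lebesgue_measure]_(t in `[0%R, +oo[%classic) ((`|phi t x s| `^ p)%:E)
      <= ((k `^ p * `|x| `^ p)%:E))%E.

From HB Require Import structures.
From mathcomp Require Import all_boot all_order all_algebra.
From mathcomp Require Import all_classical all_reals all_analysis.
From mathcomp Require Import measurable_realfun exponential_distribution.
From mathcomp Require Import ring lra.
Import Order.TTheory GRing.Theory Num.Theory.
Import numFieldNormedType.Exports.
Local Open Scope classical_set_scope.
Local Open Scope ring_scope.

(* (i) => (ii): integrate the exponential bound.  (iii) => (i): whenever
   |phi t| <= G |phi tau| for all tau in a window [a, b], the L^p bound gives
   (b - a)^(1/p) |phi t| <= G k |x|.  By the cocycle property and the bound G0 on
   [0, t1], the window [t - t1, t] yields a uniform bound C; the window [0, T] with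
   T = (2 C k)^p then yields |phi T x s| <= |x| / 2, and iterating through the
   time shift gives exponential decay at rate ln 2 / T. *)

Section powR_integrals.
Context {R : realType}.
Notation mu := (@lebesgue_measure R).

Lemma gt0_ler_powR2r {r : R} : 0 < r ->
  {in Num.nneg &, {mono (fun x : R => x `^ r) : x y / x <= y}}.
Proof. by move=> r0; apply: le_mono_in; exact: gt0_ltr_powR. Qed.

Lemma measurable_fun_powR_norm {X : normedModType R} {f : R -> X} (p : R) :
  {within `[0, +oo[, continuous f} ->
  measurable_fun (`[0%R, +oo[ : set R) (fun t => `|f t| `^ p).
Proof.
move=> cf; apply: (measurableT_comp (measurable_powR p)).
apply: subspace_continuous_measurable_fun => //.
by move=> t; apply: continuous_comp; [exact: cf | exact: norm_continuous].
Qed.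

Lemma integral_ge_itv (g : R -> R) (a b c : R) :
  measurable_fun (`[0%R, +oo[ : set R) g -> (forall t, 0 <= t -> 0 <= g t) ->
  0 <= a <= b -> 0 <= c -> (forall t, a <= t <= b -> c <= g t) ->
  (((b - a) * c)%:E <= \int[mu]_(t in `[0%R, +oo[) (g t)%:E)%E.
Proof.
move=> mg g0 /andP[a0 ab] c0 cg.
have sub_ab : `[a, b] `<=` `[0%R, +oo[.
  by move=> t /=; rewrite !in_itv /= andbT => /andP[/(le_trans a0)].
have mu_ab : mu `[a, b] = (b - a)%:E.
  rewrite lebesgue_measure_itv /= lte_fin; case: ltP => [_ | ba].
    by rewrite EFinB.
  have -> : b = a by apply/eqP; rewrite eq_le ab ba.
  by rewrite subrr.
apply: (@le_trans _ _ (\int[mu]_(t in `[a, b]) (g t)%:E)%E); last first.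
  apply: ge0_subset_integral => //; first exact/measurable_EFinP.
  by move=> t /=; rewrite in_itv /= andbT => /g0; rewrite lee_fin.
rewrite EFinM -mu_ab muleC -integral_cst //.
apply: ge0_le_integral => //.
by apply/measurable_EFinP; exact: measurable_funS mg.
Qed.

Lemma integral_expR_Nmul_le (r : R) : 0 < r ->
  (\int[mu]_(t in `[0%R, +oo[) (expR (- r * t))%:E <= (r^-1)%:E)%E.
Proof.
move=> r0.
have pdf0 t : (0 <= (exponential_pdf r t)%:E)%E.
  by rewrite lee_fin exponential_pdf_ge0 // (ltW r0).
have mpdf : measurable_fun setT (fun t => (exponential_pdf r t)%:E).
  by apply/measurable_EFinP; exact: measurable_exponential_pdf.
have -> : (\int[mu]_(t in `[0%R, +oo[) (expR (- r * t))%:E =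
    \int[mu]_(t in `[0%R, +oo[) ((r^-1)%:E * (exponential_pdf r t)%:E))%E.
  apply: eq_integral => t; rewrite inE /= in_itv /= andbT => t0.
  by rewrite -EFinM exponential_pdfE // mulKf ?gt_eqF.
have r_inv0 : (0 <= (r^-1)%:E)%E by rewrite lee_fin invr_ge0 (ltW r0).
rewrite ge0_integralZl //; last exact: measurable_funTS.
rewrite -[leRHS]mule1 lee_wpmul2l //.
by rewrite -(integral_exponential_pdf r0); exact: ge0_subset_integral.
Qed.

End powR_integrals.

Section Lp_stability.
Context {R : realType} {Q : Type} {X : completeNormedModType R}.
Context {S : set (R -> Q)} {phi : R -> X -> (R -> Q) -> X}.
Hypothesis hsys : forward_complete_dynsys S phi.
Hypothesis hshift : shift_closed S.

Lemma phi_split {t tau x s} : S s -> 0 <= tau <= t ->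
  phi t x s = phi (t - tau) (phi tau x s) (tshift tau s).
Proof.
case: hsys => _ _ _ hcocycle Ss /andP[tau0 taut].
by rewrite hcocycle ?subr_ge0 // addrC subrK.
Qed.

Lemma UGES_Lp_bound p : 0 < p -> UGES S phi -> exists k, 0 < k /\ Lp_bound S phi p k.
Proof.
case: hsys => _ _ hcont _ p0 [M [lam [M0 lam0 hM]]].
have plam0 : 0 < p * lam by rewrite mulr_gt0.
pose c := M `^ p / (p * lam).
have c0 : 0 < c by rewrite divr_gt0 // powR_gt0.
exists (c `^ p^-1); split; first exact: powR_gt0.
move=> x s Ss; rewrite -powRrM mulVf ?gt_eqF // (powRr1 (ltW c0)).
have Mx0 : (0 <= (M `^ p * `|x| `^ p)%:E)%E by rewrite lee_fin mulr_ge0 ?powR_ge0.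
have mexp : measurable_fun (`[0%R, +oo[ : set R) (fun t => (expR (- (p * lam) * t))%:E).
  by apply/measurable_EFinP; apply: measurableT_comp => //; exact: measurable_funM.
apply: (@le_trans _ _ (\int[lebesgue_measure]_(t in `[0%R, +oo[%classic)
    ((M `^ p * `|x| `^ p)%:E * (expR (- (p * lam) * t))%:E))%E).
  apply: ge0_le_integral => //.
  - apply/(measurable_EFinP _ (fun t => `|phi t x s| `^ p)).
    exact: measurable_fun_powR_norm (hcont x s Ss).
  - exact: measurable_funeM.
  - move=> t; rewrite /= in_itv /= andbT => t0; rewrite -EFinM lee_fin.
    have M_ge0 := ltW M0.
    have -> : M `^ p * `|x| `^ p * expR (- (p * lam) * t) =
        (M * expR (- lam * t) * `|x|) `^ p.
      rewrite !powRM ?mulr_ge0 ?expR_ge0 // -expRM.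
      by rewrite mulrAC; congr (_ * expR _ * _); ring.
    by rewrite gt0_ler_powR2r ?nnegrE ?mulr_ge0 ?expR_ge0 //; exact: hM.
rewrite ge0_integralZl //.
apply: le_trans (lee_wpmul2l Mx0 _) _; first exact: integral_expR_Nmul_le.
by rewrite -EFinM mulrAC.
Qed.

Section Lp_bound_consequences.
Context {p k : R}.
Hypotheses (p0 : 0 < p) (k0 : 0 < k) (hLp : Lp_bound S phi p k).

Lemma Lp_bound_window {x s a b G} {y : X} : S s -> 0 <= a <= b -> 0 < G ->
  (forall tau, a <= tau <= b -> `|y| <= G * `|phi tau x s|) ->
  (b - a) `^ p^-1 * `|y| <= G * k * `|x|.
Proof.
case: hsys => _ _ hcont _ Ss hab G0 hy.
have Gp0 : 0 < G `^ p by exact: powR_gt0.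
have int_ge := @integral_ge_itv _ (fun t => `|phi t x s| `^ p) a b (`|y| `^ p / G `^ p)
  (measurable_fun_powR_norm p (hcont x s Ss)) (fun t _ => powR_ge0 _ _) hab.
have G_ge0 := ltW G0.
have {int_ge} h : (b - a) * (`|y| `^ p / G `^ p) <= k `^ p * `|x| `^ p.
  rewrite -lee_fin; apply: le_trans (int_ge _ _) (hLp x s Ss).
    by rewrite divr_ge0 ?powR_ge0.
  move=> t /hy yt; rewrite ler_pdivrMr // mulrC -powRM //.
  by rewrite gt0_ler_powR2r ?nnegrE ?mulr_ge0.
rewrite -(gt0_ler_powR2r p0) ?nnegrE ?mulr_ge0 ?powR_ge0 ?(ltW k0) //.
have ba0 : 0 <= b - a by case/andP: hab => _; rewrite subr_ge0.
rewrite !powRM ?mulr_ge0 ?powR_ge0 ?(ltW k0) // -powRrM mulVf ?gt_eqF // (powRr1 ba0).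
by rewrite mulrA ler_pdivrMr // in h; rewrite -[leRHS]mulrA [leRHS]mulrC.
Qed.

Lemma Lp_bound_uniformly_bounded {t1 G0 : R} : 0 < t1 -> 0 < G0 ->
    (forall t x s, 0 <= t <= t1 -> S s -> `|phi t x s| <= G0 * `|x|) ->
  exists2 C, 0 < C & forall t x s, 0 <= t -> S s -> `|phi t x s| <= C * `|x|.
Proof.
move=> t1_gt0 G0_gt0 hbound.
have t1p_gt0 : 0 < t1 `^ p^-1 by exact: powR_gt0.
have G0k_gt0 : 0 < G0 * k by rewrite mulr_gt0.
exists (G0 + (t1 `^ p^-1)^-1 * (G0 * k)) => [|t x s t0 Ss].
  by rewrite addr_gt0 // mulr_gt0 // invr_gt0.
have [tt1 | t1t] := leP t t1.
  apply: le_trans (hbound t x s _ Ss) _; first by rewrite t0.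
  by rewrite ler_wpM2r // lerDl mulr_ge0 ?invr_ge0 // ltW.
apply: (@le_trans _ _ ((t1 `^ p^-1)^-1 * (G0 * k) * `|x|)); last first.
  by rewrite ler_wpM2r // lerDr ltW.
rewrite -mulrA ler_pdivlMl //.
rewrite -[X in X `^ _](subKr t); apply: (Lp_bound_window Ss) => //.
  by apply/andP; split; lra.
move=> tau /andP[t1tau taut].
have tau0 : 0 <= tau by lra.
rewrite (phi_split Ss (_ : 0 <= tau <= t)) ?tau0 //.
by apply: hbound; [lra | exact: hshift].
Qed.

Lemma Lp_bound_halving {C : R} : 0 < C ->
    (forall t x s, 0 <= t -> S s -> `|phi t x s| <= C * `|x|) ->
  exists2 T, 0 < T & forall x s, S s -> 2 * `|phi T x s| <= `|x|.
Proof.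
move=> C0 hC; have Ck0 : 0 < C * k by rewrite mulr_gt0.
pose T := (2 * (C * k)) `^ p.
have T0 : 0 < T by rewrite powR_gt0 // mulr_gt0.
have T_root : T `^ p^-1 = 2 * (C * k).
  by rewrite -powRrM mulfV ?gt_eqF // powRr1 // mulr_ge0 // (ltW Ck0).
exists T => // x s Ss.
rewrite -(ler_pM2l Ck0) mulrCA mulrA -T_root -[T in T `^ _]subr0.
apply: (Lp_bound_window Ss) => //; first by rewrite lexx (ltW T0).
move=> tau /andP[tau0 tauT]; rewrite (phi_split Ss (_ : 0 <= tau <= T)) ?tau0 //.
by apply: hC; [rewrite subr_ge0 | exact: hshift].
Qed.

End Lp_bound_consequences.

Lemma UGES_of_halving {C T : R} : 0 < C -> 0 < T ->
    (forall t x s, 0 <= t -> S s -> `|phi t x s| <= C * `|x|) ->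
    (forall x s, S s -> 2 * `|phi T x s| <= `|x|) ->
  UGES S phi.
Proof.
move=> C0 T0 hC hT; pose lam := ln 2 / T.
have lam0 : 0 < lam by rewrite divr_gt0 // ln_gt0 // ltr1n.
have expR_lamT : expR (- lam * T) = 2^-1.
  by rewrite mulNr expRN divfK ?gt_eqF // lnK // posrE.
have decay_T t x s : 0 <= t <= T -> S s ->
    `|phi t x s| <= 2 * C * expR (- lam * t) * `|x|.
  move=> /andP[t0 tT] Ss; apply: le_trans (hC t x s t0 Ss) _.
  have : 2 * expR (- lam * T) <= 2 * expR (- lam * t).
    by rewrite ler_pM2l // ler_expR !mulNr lerN2 ler_pM2l.
  rewrite expR_lamT mulfV ?pnatr_eq0 // => e_ge1.
  by rewrite ler_wpM2r // mulrAC; exact: ler_peMl (ltW C0) e_ge1.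
have decay n t x s : 0 <= t <= n%:R * T -> S s ->
    `|phi t x s| <= 2 * C * expR (- lam * t) * `|x|.
  elim: n t x s => [|n IHn] t x s /andP[t0 tn] Ss.
    by apply: decay_T => //; rewrite t0 (le_trans tn) // mul0r (ltW T0).
  have [tT | Tt] := leP t T; first by apply: decay_T; rewrite ?t0.
  rewrite (phi_split Ss (_ : 0 <= T <= t)); last by rewrite (ltW T0) (ltW Tt).
  apply: le_trans (IHn _ _ _ _ (hshift _ _ Ss (ltW T0))) _.
    by move: tn; rewrite -natr1 mulrDl mul1r => tn; apply/andP; split; lra.
  have -> : - lam * (t - T) = - lam * t + lam * T by ring.
  have expR_lamT2 : expR (lam * T) = 2.
    by rewrite -[lam * T]opprK -mulNr expRN expR_lamT invrK.
  by rewrite expRD expR_lamT2 -!mulrA !ler_pM2l ?expR_gt0 // hT.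
exists (2 * C), lam; split => //; first by rewrite mulr_gt0.
move=> t x s t0 Ss; apply: (decay (Num.truncn (t / T)).+1) => //.
by rewrite t0 -ler_pdivrMr //; exact/ltW/truncnS_gt.
Qed.

End Lp_stability.

Theorem theorem3 (R : realType) (Q : Type) (X : completeNormedModType R)
  (S : set (R -> Q)) (phi : R -> X -> (R -> Q) -> X)
  (hQ : inhabited Q) (hshift : shift_closed S) (hconcat : concat_closed S)
  (hsys : forward_complete_dynsys S phi)
  (t1 G0 : R) (ht1 : 0 < t1) (hG0 : 0 < G0)
  (hbound : forall t x s, 0 <= t <= t1 -> S s -> `|phi t x s| <= G0 * `|x|) :
  [<-> UGES S phi;
       (forall p : R, 0 < p -> exists k : R, 0 < k /\ Lp_bound S phi p k);
       (exists p k : R, [/\ 0 < p, 0 < k & Lp_bound S phi p k])].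
Proof.
split=> [hUGES p p0 | ]; first exact: UGES_Lp_bound.
split=> [hLp | [p [k [p0 k0 hLp]]]].
  by have [k [k0 hk]] := hLp 1 ltr01; exists 1, k.
have [C C0 hC] := Lp_bound_uniformly_bounded hsys hshift p0 k0 hLp ht1 hG0 hbound.
have [T T0 hT] := Lp_bound_halving hsys hshift p0 k0 hLp C0 hC.
exact: (UGES_of_halving hsys hshift C0 T0 hC hT).
Qed.
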